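(* For $f>1$ let $h^*=h^*(f)>1$ and $h_*=h_*(f)\in(0,1)$ be the two solutions $h$ of $h-\log h=f$, and define $$j^*(f)=\frac1{h^*-1}-\frac1{(2(f-1))^{1/2}},\qquad j_*(f)=\frac1{1-h_*}-\frac1{(2(f-1))^{1/2}}.$$ Then: (a) as $f\to1$, $j^*\to-\frac13$ and $j_*\to\frac13$; (b) $\frac{dj^*}{df}>0$ and $\frac{dj_*}{df}>0$ for $f>1$, and $\frac{dj^*}{df}=O((f-1)^{-1/2})$, $\frac{dj_*}{df}=O((f-1)^{-1/2})$ as $f\to1$; (c) $\frac{d^2j^*}{df^2}<0$ and $\frac{d^2j_*}{df^2}<0$ for $f>1$; (d) the function $j^*+j_*=\frac1{h^*-1}+\frac1{1-h_*}-\big(\frac2{f-1}\big)^{1/2}$ satisfies $\frac{d(j^*+j_* )}{df}>0$ and $\frac{d^2(j^*+j_* )}{df^2}<0$ for $f>1$, and $j^*+j_*\to0$, $\frac{d(j^*+j_* )}{df}=O((f-1)^{-1/2})$ as $f\to1$; (e) $0<j^*+j_*<1$ for $f>1$. *)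

From Stdlib Require Import Reals ClassicalEpsilon.
From Coquelicot Require Import Coquelicot.
Open Scope R_scope.

(* h^*(f): the solution h > 1 of h - ln h = f (chosen by Hilbert epsilon;
   for f > 1 it exists and is unique). *)
Definition hup (f : R) : R :=
  epsilon (inhabits 0) (fun h => 1 < h /\ h - ln h = f).

Definition hlo (f : R) : R :=
  epsilon (inhabits 0) (fun h => 0 < h < 1 /\ h - ln h = f).

Definition jup (f : R) : R := / (hup f - 1) - / sqrt (2 * (f - 1)).
Definition jlo (f : R) : R := / (1 - hlo f) - / sqrt (2 * (f - 1)).
Definition jsum (f : R) : R := jup f + jlo f.

Definition bigO_inv_sqrt_at1 (g : R -> R) : Prop :=
  exists C delta : R, 0 < delta /\
    forall f, 1 < f < 1 + delta -> Rabs (g f) <= C * / sqrt (f - 1).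

From Stdlib Require Import Reals Lra Psatz ClassicalEpsilon FunctionalExtensionality.
From Coquelicot Require Import Coquelicot.
Open Scope R_scope.

(* Both branches h = h^*(f), h_*(f) solve h - ln h = f, so 2 (f - 1) = g(h) with
   g(h) = 2 (h - 1 - ln h), and dh/df = h / (h - 1).  With r = sqrt (g(h)) this gives
   j' = r^-3 - h / |h - 1|^3 and j'' = h (2h + 1) / |h - 1|^5 - 3 r^-5, whose signs
   reduce to g(h)^3 h^2 < (h - 1)^6 and g(h)^5 (h (2h + 1))^2 < 9 (h - 1)^10.  These
   follow by raising g(h) < (h - 1)^2 h^(-2/3) and
   g(h) < (h - 1)^2 (3 / (h (2h + 1)))^(2/5) to the third and fifth power; each of
   these is proved by checking that the difference vanishes at h = 1 and is monotone
   on either side of it.  The limits at f = 1 and the O((f - 1)^(-1/2)) bounds follow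
   from low-order Taylor bounds for ln near 1.  Finally j^* + j_* increases from its
   limit 0, so it is positive, and it is below 1 because j^* < 0 and j_* < 1. *)

Lemma pow2_gt_0 x : x <> 0 -> 0 < x ^ 2.
Proof. intro Hx. rewrite <- Rsqr_pow2. apply Rsqr_pos_lt, Hx. Qed.

Lemma pow_lt_pow_l a b n : 0 <= a -> a < b -> (0 < n)%nat -> a ^ n < b ^ n.
Proof.
  intros Ha Hab Hn. induction n as [|[|n] IH]; [lia | simpl; lra |].
  change (a * a ^ S n < b * b ^ S n).
  apply Rmult_le_0_lt_compat; auto using pow_le. apply IH. lia.
Qed.

Lemma lt_of_pow_lt_pow a b n : 0 <= b -> a ^ n < b ^ n -> a < b.
Proof.
  intros Hb Hn. destruct (Rlt_or_le a b) as [|Hba]; auto.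
  pose proof (pow_incr b a n (conj Hb Hba)). lra.
Qed.

Lemma sign_cases s : s * s = 1 -> s = 1 \/ s = -1.
Proof. intro Hs. assert (E : (s - 1) * (s + 1) = 0) by nra. apply Rmult_integral in E. lra. Qed.

Lemma Rpower_pow_INR x y n : Rpower x y ^ n = Rpower x (INR n * y).
Proof. rewrite <- Rpower_pow by apply exp_pos. rewrite Rpower_mult. f_equal. ring. Qed.

Lemma two_mul_lt_exp x : 0 < x -> 2 * x < exp x.
Proof.
  intro Hx.
  pose proof (exp_ineq1 (x / 2) ltac:(lra)) as He.
  replace (exp x) with (exp (x / 2) * exp (x / 2)) by (rewrite <- exp_plus; f_equal; lra).
  pose proof (Rle_0_sqr (1 - x / 2)). unfold Rsqr in *. nra.
Qed.

Lemma ln_lt_sub1 x : 0 < x -> x <> 1 -> ln x < x - 1.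
Proof.
  intros Hx Hx1.
  pose proof (exp_ineq1 (ln x) (ln_neq_0 x Hx1 Hx)) as H. rewrite exp_ln in H; lra.
Qed.

Lemma pos_of_deriv_pos (F dF : R -> R) (a : R) :
  F a = 0 -> (forall x, a <= x -> is_derive F x (dF x)) ->
  (forall x, a < x -> 0 < dF x) -> forall x, a < x -> 0 < F x.
Proof.
  intros Fa HF HdF x Hx.
  destruct (MVT_cor2 F dF a x Hx) as [c [Ec Hc]].
  - intros c Hc. apply is_derive_Reals, HF. lra.
  - pose proof (HdF c (proj1 Hc)). nra.
Qed.

Lemma pos_of_deriv_neg (F dF : R -> R) (a b : R) :
  F b = 0 -> (forall x, a < x <= b -> is_derive F x (dF x)) ->
  (forall x, a < x < b -> dF x < 0) -> forall x, a < x < b -> 0 < F x.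
Proof.
  intros Fb HF HdF x Hx.
  destruct (MVT_cor2 F dF x b (proj2 Hx)) as [c [Ec Hc]].
  - intros c Hc. apply is_derive_Reals, HF. lra.
  - pose proof (HdF c ltac:(lra)). nra.
Qed.

Lemma pos_of_deriv_sign (F dF : R -> R) (a : R) :
  0 < a -> F a = 0 -> (forall x, 0 < x -> is_derive F x (dF x)) ->
  (forall x, 0 < x < a -> dF x < 0) -> (forall x, a < x -> 0 < dF x) ->
  forall x, 0 < x -> x <> a -> 0 < F x.
Proof.
  intros Ha Fa HF Hneg Hpos x Hx Hxa.
  destruct (Rtotal_order x a) as [Hlt|[Heq|Hgt]]; [|lra|].
  - refine (pos_of_deriv_neg F dF 0 a Fa _ Hneg x _); [intros y Hy; apply HF|]; lra.
  - refine (pos_of_deriv_pos F dF a Fa _ Hpos x Hgt). intros y Hy. apply HF. lra.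
Qed.

Lemma pos_of_increasing_lim0 (g : R -> R) a :
  (forall x y, a < x -> x < y -> g x < g y) -> filterlim g (at_right a) (locally 0) ->
  forall x, a < x -> 0 < g x.
Proof.
  intros Hincr Hlim x Hx.
  set (y := (a + x) / 2).
  assert (Hyx : g y < g x) by (apply Hincr; unfold y; lra).
  destruct (Rlt_or_le 0 (g x)) as [|Hgx]; [assumption | exfalso].
  destruct (proj1 (filterlim_locally g 0) Hlim (mkposreal (- g y) ltac:(lra))) as [d Hd].
  set (t := Rmin y (a + d / 2)).
  pose proof (cond_pos d). pose proof (Rmin_l y (a + d / 2)). pose proof (Rmin_r y (a + d / 2)).
  assert (Hat : a < t) by (unfold t, Rmin, y in *; destruct Rle_dec; lra).
  assert (Hty : g t <= g y).
  { destruct (Rle_lt_or_eq_dec t y ltac:(unfold t; lra)) as [Hlt| ->];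
      [apply Rlt_le, Hincr|]; lra. }
  assert (Hb : ball a d t) by (apply Rabs_lt_between'; simpl; unfold t in *; lra).
  specialize (Hd t Hb Hat). apply Rabs_lt_between' in Hd. simpl in Hd. lra.
Qed.

Lemma inverse_on_image (psi K : R -> R) (a b lb ub : R) :
  (forall x, a < x < b -> continuity_pt psi x) ->
  (forall x, a < x < b -> K (psi x) = x) ->
  a < lb -> lb < ub -> ub < b ->
  forall w, psi lb <= w <= psi ub -> lb <= K w <= ub /\ psi (K w) = w.
Proof.
  intros Hc HK Ha Hlu Hb w Hw.
  destruct (Req_dec w (psi lb)) as [->|Hl]; [rewrite HK; lra|].
  destruct (Req_dec w (psi ub)) as [->|Hu]; [rewrite HK; lra|].
  destruct (Ranalysis5.IVT_interv (fun x => psi x - w) lb ub) as [x [Hx Ex]];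
    [| lra | lra | lra |].
  - intros x Hx. apply continuity_pt_minus;
      [apply Hc; lra | apply continuity_pt_const; now intros ? ?].
  - replace w with (psi x) by lra. rewrite HK by lra. lra.
Qed.

Lemma is_derive_inverse (psi dpsi K : R -> R) (a b f : R) :
  (forall x, a < x < b -> is_derive psi x (dpsi x)) ->
  (forall x y, a < x -> x < y -> y < b -> psi x < psi y) ->
  (forall x, a < x < b -> K (psi x) = x) ->
  a < K f < b -> psi (K f) = f -> dpsi (K f) <> 0 ->
  is_derive K f (/ dpsi (K f)).
Proof.
  intros Hd Hincr HK Hf Ef Hnz.
  set (k := K f) in *.
  set (lb := (a + k) / 2). set (ub := (k + b) / 2).
  assert (Hc : forall x, a < x < b -> continuity_pt psi x).
  { intros x Hx. apply derivable_continuous_pt. exists (dpsi x). apply is_derive_Reals, Hd, Hx. }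
  assert (Himg := inverse_on_image psi K a b lb ub Hc HK ltac:(unfold lb; lra)
                    ltac:(unfold lb, ub; lra) ltac:(unfold ub; lra)).
  assert (Klb : K (psi lb) = lb) by (apply HK; unfold lb; lra).
  assert (Kub : K (psi ub) = ub) by (apply HK; unfold ub; lra).
  assert (Pf : psi lb < f < psi ub) by (rewrite <- Ef; split; apply Hincr; unfold lb, ub; lra).
  assert (HcK : continuity_pt K f).
  { apply (Ranalysis5.continuity_pt_recip_interv psi K lb ub); try (unfold lb, ub; lra).
    - intros x y ? ? ?. apply Hincr; unfold lb, ub in *; lra.
    - intros x ? ?. unfold comp, id. apply Himg; lra.
    - intros x ? ?. apply Himg; lra.
    - intros x Hx. apply Hc. unfold lb, ub in *; lra.
    - exact Pf. }
  assert (Pd : forall x, K (psi lb) <= x <= K (psi ub) -> derivable_pt psi x).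
  { intros x Hx. rewrite Klb, Kub in Hx. exists (dpsi x).
    apply is_derive_Reals, Hd. unfold lb, ub in *; lra. }
  assert (Pk : K (psi lb) <= K f <= K (psi ub)) by (rewrite Klb, Kub; fold k; unfold lb, ub; lra).
  assert (Ed : derive_pt psi (K f) (Pd (K f) Pk) = dpsi k).
  { apply derive_pt_eq_0, is_derive_Reals, Hd. fold k. lra. }
  apply is_derive_Reals. replace (/ dpsi k) with (1 / derive_pt psi (K f) (Pd (K f) Pk))
    by (rewrite Ed; field; exact Hnz).
  apply (Ranalysis5.derivable_pt_lim_recip_interv psi K (psi lb) (psi ub) f Pd HcK
           ltac:(lra) Pf Pk).
  - intros x Hx. unfold comp, id. apply Himg. lra.
  - rewrite Ed. exact Hnz.
Qed.

Lemma is_derive_comp_R (F G : R -> R) x dF dG :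
  is_derive G x dG -> is_derive F (G x) dF -> is_derive (fun y => F (G y)) x (dF * dG).
Proof. intros HG HF. rewrite Rmult_comm. exact (is_derive_comp F G x dF dG HF HG). Qed.

Lemma locally_gt1 f : 1 < f -> locally f (fun t => 1 < t).
Proof. exact (open_gt 1 f). Qed.

Lemma ex_derive_Derive_pos (F : R -> R) f d :
  is_derive F f d -> 0 < d -> ex_derive F f /\ 0 < Derive F f.
Proof.
  intros HF Hd. split; [exists d; exact HF | rewrite (is_derive_unique _ _ _ HF); exact Hd].
Qed.

Lemma ex_derive_Derive_neg (F : R -> R) f d :
  is_derive F f d -> d < 0 -> ex_derive F f /\ Derive F f < 0.
Proof.
  intros HF Hd. split; [exists d; exact HF | rewrite (is_derive_unique _ _ _ HF); exact Hd].
Qed.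

Lemma at_right_of_interval x d (P : R -> Prop) :
  0 < d -> (forall y, x < y < x + d -> P y) -> at_right x P.
Proof.
  intros Hd HP. exists (mkposreal d Hd). intros y Hy Hxy.
  apply HP. apply Rabs_lt_between' in Hy. simpl in Hy. lra.
Qed.

Lemma continuous_at_right (F : R -> R) x :
  continuous F x -> filterlim F (at_right x) (locally (F x)).
Proof. intro HF. exact (filterlim_filter_le_1 F (filter_le_within _) HF). Qed.

Lemma bigO_inv_sqrt_at1_plus (g1 g2 g : R -> R) :
  (forall f, 1 < f -> g f = g1 f + g2 f) ->
  bigO_inv_sqrt_at1 g1 -> bigO_inv_sqrt_at1 g2 -> bigO_inv_sqrt_at1 g.
Proof.
  intros Hg [C1 [d1 [Hd1 B1]]] [C2 [d2 [Hd2 B2]]].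
  exists (C1 + C2), (Rmin d1 d2). split; [apply Rmin_glb_lt; assumption|]. intros f Hf.
  pose proof (Rmin_l d1 d2). pose proof (Rmin_r d1 d2).
  rewrite Hg by lra. eapply Rle_trans; [apply Rabs_triang|].
  pose proof (B1 f ltac:(lra)). pose proof (B2 f ltac:(lra)). lra.
Qed.

Lemma ln_lt_cubic h : 1 < h -> ln h < (h-1) - (h-1)^2/2 + (h-1)^3/3.
Proof.
  intro Hh.
  enough (0 < (h-1) - (h-1)^2/2 + (h-1)^3/3 - ln h) by lra.
  refine (pos_of_deriv_pos (fun x => (x-1) - (x-1)^2/2 + (x-1)^3/3 - ln x)
            (fun x => (x-1)^3 / x) 1 _ _ _ h Hh).
  - rewrite ln_1. field.
  - intros x Hx. auto_derive; [lra | field; lra].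
  - intros x Hx. apply Rdiv_lt_0_compat; [apply pow_lt|]; lra.
Qed.

Lemma quartic_lt_ln h : 1 < h -> (h-1) - (h-1)^2/2 + (h-1)^3/3 - (h-1)^4/4 < ln h.
Proof.
  intro Hh.
  enough (0 < ln h - ((h-1) - (h-1)^2/2 + (h-1)^3/3 - (h-1)^4/4)) by lra.
  refine (pos_of_deriv_pos (fun x => ln x - ((x-1) - (x-1)^2/2 + (x-1)^3/3 - (x-1)^4/4))
            (fun x => (x-1)^4 / x) 1 _ _ _ h Hh).
  - rewrite ln_1. field.
  - intros x Hx. auto_derive; [lra | field; lra].
  - intros x Hx. apply Rdiv_lt_0_compat; [apply pow_lt|]; lra.
Qed.

Lemma quadratic_lt_ln h : 1 < h -> (h-1) - (h-1)^2/2 < ln h.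
Proof.
  intro Hh.
  enough (0 < ln h - ((h-1) - (h-1)^2/2)) by lra.
  refine (pos_of_deriv_pos (fun x => ln x - ((x-1) - (x-1)^2/2))
            (fun x => (x-1)^2 / x) 1 _ _ _ h Hh).
  - rewrite ln_1. field.
  - intros x Hx. auto_derive; [lra | field; lra].
  - intros x Hx. apply Rdiv_lt_0_compat; [apply pow_lt|]; lra.
Qed.

Lemma cubic_lt_opp_ln h : 0 < h < 1 -> (1-h) + (1-h)^2/2 + (1-h)^3/3 < - ln h.
Proof.
  intro Hh.
  enough (0 < - ln h - ((1-h) + (1-h)^2/2 + (1-h)^3/3)) by lra.
  refine (pos_of_deriv_neg (fun x => - ln x - ((1-x) + (1-x)^2/2 + (1-x)^3/3))
            (fun x => - (1-x)^3 / x) 0 1 _ _ _ h Hh).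
  - rewrite ln_1. field.
  - intros x Hx. auto_derive; [lra | field; lra].
  - intros x Hx. pose proof (pow_lt (1-x) 3 ltac:(lra)).
    apply Rdiv_neg_pos; lra.
Qed.

Lemma opp_ln_lt_quartic h :
  1/2 < h < 1 -> - ln h < (1-h) + (1-h)^2/2 + (1-h)^3/3 + (1-h)^4/2.
Proof.
  intro Hh.
  enough (0 < (1-h) + (1-h)^2/2 + (1-h)^3/3 + (1-h)^4/2 + ln h) by lra.
  refine (pos_of_deriv_neg (fun x => (1-x) + (1-x)^2/2 + (1-x)^3/3 + (1-x)^4/2 + ln x)
            (fun x => (1-x)^3 * (1 - 2*x) / x) (1/2) 1 _ _ _ h Hh).
  - rewrite ln_1. field.
  - intros x Hx. auto_derive; [lra | field; lra].
  - intros x Hx. pose proof (pow_lt (1-x) 3 ltac:(lra)).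
    apply Rdiv_neg_pos; nra.
Qed.

Lemma opp_ln_lt_half_inv_sub h : 0 < h < 1 -> - ln h < (/ h - h) / 2.
Proof.
  intro Hh.
  enough (0 < (/ h - h) / 2 + ln h) by lra.
  refine (pos_of_deriv_neg (fun x => (/ x - x) / 2 + ln x)
            (fun x => - (1-x)^2 / (2 * x^2)) 0 1 _ _ _ h Hh).
  - rewrite ln_1. field.
  - intros x Hx. auto_derive; [lra | field; lra].
  - intros x Hx. pose proof (pow_lt (1-x) 2 ltac:(lra)). pose proof (pow_lt x 2 ltac:(lra)).
    apply Rdiv_neg_pos; lra.
Qed.

(** * The two branches of h - ln h = f *)

Definition phi (h : R) : R := h - ln h.

Lemma phi_1 : phi 1 = 1.
Proof. unfold phi. rewrite ln_1. ring. Qed.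

Lemma one_lt_phi h : 0 < h -> h <> 1 -> 1 < phi h.
Proof. intros Hh Hh1. unfold phi. pose proof (ln_lt_sub1 h Hh Hh1). lra. Qed.

Lemma is_derive_phi h : 0 < h -> is_derive phi h (1 - / h).
Proof. intro Hh. unfold phi. auto_derive; [lra | field; lra]. Qed.

Lemma phi_increasing a b : 1 <= a -> a < b -> phi a < phi b.
Proof.
  intros Ha Hab. unfold phi.
  assert (Hba : b / a <> 1) by (intro E; apply (f_equal (Rmult a)) in E; field_simplify in E; lra).
  pose proof (ln_lt_sub1 (b / a) ltac:(apply Rdiv_lt_0_compat; lra) Hba) as Hln.
  rewrite ln_div in Hln by lra.
  assert (b / a - 1 <= b - a).
  { apply (Rmult_le_reg_r a); [lra|]. replace ((b / a - 1) * a) with (b - a) by (field; lra). nra. }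
  lra.
Qed.

Lemma phi_decreasing a b : 0 < a -> a < b -> b <= 1 -> phi b < phi a.
Proof.
  intros Ha Hab Hb. unfold phi.
  assert (Hab' : a / b <> 1) by (intro E; apply (f_equal (Rmult b)) in E; field_simplify in E; lra).
  pose proof (ln_lt_sub1 (a / b) ltac:(apply Rdiv_lt_0_compat; lra) Hab') as Hln.
  rewrite ln_div in Hln by lra.
  assert (b - a <= 1 - a / b).
  { apply (Rmult_le_reg_r b); [lra|]. replace ((1 - a / b) * b) with (b - a) by (field; lra). nra. }
  lra.
Qed.

Lemma phi_continuous h : 0 < h -> continuity_pt phi h.
Proof.
  intro Hh. apply derivable_continuous_pt. exists (1 - / h).
  apply is_derive_Reals, is_derive_phi, Hh.
Qed.

Lemma hup_exists f : 1 < f -> exists h, 1 < h /\ h - ln h = f.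
Proof.
  intro Hf. pose proof (two_mul_lt_exp f ltac:(lra)) as Hexp.
  destruct (Ranalysis5.IVT_interv (fun h => phi h - f) 1 (exp f)) as [h [Hh Eh]].
  - intros x Hx. apply continuity_pt_minus;
      [apply phi_continuous; lra | apply continuity_pt_const; now intros ? ?].
  - lra.
  - rewrite phi_1. lra.
  - unfold phi. rewrite ln_exp. lra.
  - exists h. unfold phi in Eh. split; [|lra].
    destruct (Req_dec h 1) as [->|]; [rewrite ln_1 in Eh|]; lra.
Qed.

Lemma hlo_exists f : 1 < f -> exists h, 0 < h < 1 /\ h - ln h = f.
Proof.
  intro Hf. pose proof (exp_pos (- f)) as Hpos.
  assert (Hlt : exp (- f) < 1) by (rewrite <- exp_0; apply exp_increasing; lra).
  destruct (Ranalysis5.IVT_interv (fun h => f - phi h) (exp (- f)) 1) as [h [Hh Eh]].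
  - intros x Hx. apply continuity_pt_minus;
      [apply continuity_pt_const; now intros ? ? | apply phi_continuous; lra].
  - exact Hlt.
  - unfold phi. rewrite ln_exp. lra.
  - rewrite phi_1. lra.
  - exists h. unfold phi in Eh. split; [|lra].
    destruct (Req_dec h 1) as [->|]; [rewrite ln_1 in Eh|]; lra.
Qed.

Lemma hup_spec f : 1 < f -> 1 < hup f /\ phi (hup f) = f.
Proof. intro Hf. unfold hup, phi. apply epsilon_spec, hup_exists, Hf. Qed.

Lemma hlo_spec f : 1 < f -> 0 < hlo f < 1 /\ phi (hlo f) = f.
Proof. intro Hf. unfold hlo, phi. apply epsilon_spec, hlo_exists, Hf. Qed.

Lemma hup_phi h : 1 < h -> hup (phi h) = h.
Proof.
  intro Hh. destruct (hup_spec (phi h) (one_lt_phi h ltac:(lra) ltac:(lra))) as [H1 H2].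
  destruct (Rtotal_order (hup (phi h)) h) as [Hlt|[Heq|Hgt]]; auto.
  - apply phi_increasing in Hlt; lra.
  - apply phi_increasing in Hgt; lra.
Qed.

Lemma hlo_phi h : 0 < h < 1 -> hlo (phi h) = h.
Proof.
  intro Hh. destruct (hlo_spec (phi h) (one_lt_phi h ltac:(lra) ltac:(lra))) as [H1 H2].
  destruct (Rtotal_order (hlo (phi h)) h) as [Hlt|[Heq|Hgt]]; auto.
  - apply phi_decreasing in Hlt; lra.
  - apply phi_decreasing in Hgt; lra.
Qed.

Lemma hup_lt_of_lt_phi f h : 1 < h -> 1 < f < phi h -> hup f < h.
Proof.
  intros Hh Hf. destruct (hup_spec f ltac:(lra)) as [H1 H2].
  destruct (Rlt_or_le (hup f) h) as [|Hle]; auto.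
  destruct (Rle_lt_or_eq_dec _ _ Hle) as [Hlt| ->]; [apply phi_increasing in Hlt|]; lra.
Qed.

Lemma lt_hlo_of_lt_phi f h : 0 < h < 1 -> 1 < f < phi h -> h < hlo f.
Proof.
  intros Hh Hf. destruct (hlo_spec f ltac:(lra)) as [H1 H2].
  destruct (Rlt_or_le h (hlo f)) as [|Hle]; auto.
  destruct (Rle_lt_or_eq_dec _ _ Hle) as [Hlt| <-]; [apply phi_decreasing in Hlt|]; lra.
Qed.

Lemma is_derive_hup f : 1 < f -> is_derive hup f (hup f / (hup f - 1)).
Proof.
  intro Hf. destruct (hup_spec f Hf) as [H1 H2].
  replace (hup f / (hup f - 1)) with (/ (1 - / hup f)) by (field; lra).
  apply (is_derive_inverse phi (fun h => 1 - / h) hup 1 (hup f + 1)); auto; try lra.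
  - intros x Hx. apply is_derive_phi. lra.
  - intros x y ? ? ?. apply phi_increasing; lra.
  - intros x Hx. apply hup_phi. lra.
  - assert (/ hup f < 1) by (rewrite <- Rinv_1; apply Rinv_lt_contravar; lra). lra.
Qed.

(* [hlo] is decreasing, so it is written as [- K] with [K] the inverse of the
   increasing map [x |-> phi (- x)] on (-1, 0). *)
Lemma is_derive_hlo f : 1 < f -> is_derive hlo f (hlo f / (hlo f - 1)).
Proof.
  intro Hf. destruct (hlo_spec f Hf) as [H1 H2].
  assert (HK : is_derive (fun t => - hlo t) f (/ (- (1 + / (- hlo f))))).
  { apply (is_derive_inverse (fun x => phi (- x)) (fun x => - (1 + / x)) (fun t => - hlo t) (-1) 0);
      try rewrite Ropp_involutive; auto; try lra.
    - intros x Hx. unfold phi. auto_derive; [lra | field; lra].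
    - intros x y ? ? ?. apply phi_decreasing; lra.
    - intros x Hx. rewrite hlo_phi; lra.
    - assert (1 < / hlo f) by (rewrite <- Rinv_1; apply Rinv_lt_contravar; lra).
      rewrite Rinv_opp. lra. }
  apply is_derive_opp in HK.
  replace (hlo f / (hlo f - 1)) with (opp (/ - (1 + / - hlo f))) by (unfold opp; simpl; field; lra).
  apply (is_derive_ext (fun t => opp (- hlo t))); [intro t; unfold opp; simpl; ring | exact HK].
Qed.

Lemma hup_sub1_lim : filterlim (fun f => hup f - 1) (at_right 1) (at_right 0).
Proof.
  intros P [eps HP].
  pose proof (cond_pos eps) as Heps.
  pose proof (phi_increasing 1 (1 + eps / 2) ltac:(lra) ltac:(lra)) as Hphi. rewrite phi_1 in Hphi.
  apply (at_right_of_interval 1 (phi (1 + eps / 2) - 1)); [lra|]. intros f Hf.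
  destruct (hup_spec f ltac:(lra)) as [H1 _].
  pose proof (hup_lt_of_lt_phi f (1 + eps / 2) ltac:(lra) ltac:(lra)).
  apply HP; [apply Rabs_lt_between'; simpl|]; lra.
Qed.

Lemma one_sub_hlo_lim : filterlim (fun f => 1 - hlo f) (at_right 1) (at_right 0).
Proof.
  intros P [eps HP].
  set (e := Rmin (eps / 2) (1 / 2)).
  assert (He : 0 < e < 1) by (pose proof (cond_pos eps); unfold e, Rmin; destruct Rle_dec; lra).
  assert (Hee : e < eps)
    by (pose proof (cond_pos eps); pose proof (Rmin_l (eps / 2) (1 / 2)); unfold e; lra).
  pose proof (phi_decreasing (1 - e) 1 ltac:(lra) ltac:(lra) ltac:(lra)) as Hphi.
  rewrite phi_1 in Hphi.
  apply (at_right_of_interval 1 (phi (1 - e) - 1)); [lra|]. intros f Hf.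
  destruct (hlo_spec f ltac:(lra)) as [H1 _].
  pose proof (lt_hlo_of_lt_phi f (1 - e) ltac:(lra) ltac:(lra)).
  apply HP; [apply Rabs_lt_between'; simpl|]; lra.
Qed.

(** * Bounds on 2 (h - 1 - ln h) *)

Definition gphi (h : R) : R := 2 * (phi h - 1).

Lemma gphi_pos h : 0 < h -> h <> 1 -> 0 < gphi h.
Proof. intros Hh Hh1. unfold gphi. pose proof (one_lt_phi h Hh Hh1). lra. Qed.

Lemma sqrt_sqr_gphi h f : phi h = f -> 1 <= f -> sqrt (2 * (f - 1)) ^ 2 = gphi h.
Proof. intros Hphi Hf. rewrite <- Rsqr_pow2, Rsqr_sqrt by lra. unfold gphi. rewrite Hphi. ring. Qed.

Lemma gphi_lt_sqr h : 1 < h -> gphi h < (h - 1) ^ 2.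
Proof. intro Hh. pose proof (quadratic_lt_ln h Hh). unfold gphi, phi. lra. Qed.

Lemma gphi_lt_sqr_div h : 0 < h < 1 -> gphi h < ((1 - h) / h) ^ 2.
Proof.
  intro Hh. pose proof (opp_ln_lt_half_inv_sub h Hh).
  assert (Hdiv : gphi h < (1 - h) ^ 2 / h).
  { unfold gphi, phi. replace ((1 - h) ^ 2 / h) with (h - 2 + / h) by (field; lra). lra. }
  assert ((1 - h) ^ 2 / h < ((1 - h) / h) ^ 2).
  { replace (((1 - h) / h) ^ 2) with ((1 - h) ^ 2 / h * / h) by (field; lra).
    assert (1 < / h) by (rewrite <- Rinv_1; apply Rinv_lt_contravar; lra).
    assert (0 < (1 - h) ^ 2 / h) by (apply Rdiv_lt_0_compat; [apply pow_lt|]; lra). nra. }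
  lra.
Qed.

Lemma gphi_near1_bounds h : 1/2 <= h <= 3/2 -> h <> 1 ->
  (h - 1) ^ 2 * (1 - 2 * (h - 1) / 3) < gphi h < 4 * (h - 1) ^ 2.
Proof.
  intros Hh Hh1. pose proof (pow2_gt_0 (h - 1) ltac:(lra)).
  destruct (Rlt_or_le 1 h) as [Hgt|Hle].
  - pose proof (ln_lt_cubic h Hgt). pose proof (gphi_lt_sqr h Hgt).
    assert ((h - 1) ^ 2 * (1 - 2 * (h - 1) / 3) = (h - 1) ^ 2 - 2 * (h - 1) ^ 3 / 3) by field.
    split; [unfold gphi, phi; lra | lra].
  - pose proof (cubic_lt_opp_ln h ltac:(lra)). pose proof (gphi_lt_sqr_div h ltac:(lra)).
    assert ((h - 1) ^ 2 * (1 - 2 * (h - 1) / 3) = (1 - h) ^ 2 + 2 * (1 - h) ^ 3 / 3) by field.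
    split; [unfold gphi, phi; lra|].
    assert (((1 - h) / h) ^ 2 <= 4 * (h - 1) ^ 2).
    { replace (((1 - h) / h) ^ 2) with ((h - 1) ^ 2 * (/ h) ^ 2) by (field; lra).
      assert (/ h <= 2) by (rewrite <- (Rinv_inv 2); apply Rinv_le_contravar; lra).
      assert (0 < / h) by (apply Rinv_0_lt_compat; lra).
      rewrite (Rmult_comm 4). apply Rmult_le_compat_l; [lra|].
      replace 4 with (2 ^ 2) by ring. apply pow_incr. lra. }
    lra.
Qed.

Lemma Rpower_cube_mul_sqr x : 0 < x -> Rpower x (- (2/3)) ^ 3 * x ^ 2 = 1.
Proof.
  intro Hx. rewrite Rpower_pow_INR, <- (Rpower_pow 2 x Hx), <- Rpower_plus.
  replace (INR 3 * - (2/3) + INR 2) with 0 by (simpl; field). apply Rpower_O, Hx.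
Qed.

Lemma Rpower_fifth_mul_sqr q : 0 < q -> Rpower (3 / q) (2/5) ^ 5 * q ^ 2 = 9.
Proof.
  intro Hq. rewrite Rpower_pow_INR. replace (INR 5 * (2/5)) with (INR 2) by (simpl; field).
  rewrite Rpower_pow by (apply Rdiv_lt_0_compat; lra). field. lra.
Qed.

Lemma Rpower_gt_0 x y : 0 < Rpower x y.
Proof. apply exp_pos. Qed.

(* AM-GM for x, x, 1. *)
Lemma Rpower_two_thirds_mul_gt x : 0 < x -> x <> 1 -> 3 < Rpower x (- (2/3)) * (2 * x + 1).
Proof.
  intros Hx Hx1.
  pose proof (Rpower_cube_mul_sqr x Hx) as E3. pose proof (Rpower_gt_0 x (- (2/3))).
  assert (AMGM : (2 * x + 1) ^ 3 - 27 * x ^ 2 = (x - 1) ^ 2 * (8 * x + 1)) by ring.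
  pose proof (pow2_gt_0 (x - 1) ltac:(lra)). pose proof (pow_lt x 2 Hx).
  apply (lt_of_pow_lt_pow _ _ 3); [nra|].
  apply (Rmult_lt_reg_r (x ^ 2)); [assumption|].
  replace ((Rpower x (- (2/3)) * (2 * x + 1)) ^ 3 * x ^ 2)
    with ((Rpower x (- (2/3)) ^ 3 * x ^ 2) * (2 * x + 1) ^ 3) by ring.
  rewrite E3. nra.
Qed.

Lemma Rpower_two_fifths_mul_gt x : 0 < x -> x <> 1 ->
  5 * (2 * x + 1) < Rpower (3 / (x * (2 * x + 1))) (2/5) * (6 * x ^ 2 + 8 * x + 1).
Proof.
  intros Hx Hx1. set (q := x * (2 * x + 1)).
  assert (Hq : 0 < q) by (unfold q; nra).
  pose proof (Rpower_fifth_mul_sqr q Hq) as E5. pose proof (Rpower_gt_0 (3 / q) (2/5)).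
  assert (Hpoly : 9 * (6 * x ^ 2 + 8 * x + 1) ^ 5 - (5 * (2 * x + 1)) ^ 5 * q ^ 2
    = (x - 1) ^ 2 * (9 + 378*x + 3652*x^2 + 17896*x^3 + 60880*x^4 + 154496*x^5
                     + 245552*x^6 + 206528*x^7 + 69984*x^8)) by (unfold q; ring).
  assert (HP : 0 < 9 + 378*x + 3652*x^2 + 17896*x^3 + 60880*x^4 + 154496*x^5
                   + 245552*x^6 + 206528*x^7 + 69984*x^8).
  { pose proof (pow_lt x 2 Hx); pose proof (pow_lt x 3 Hx); pose proof (pow_lt x 4 Hx);
    pose proof (pow_lt x 5 Hx); pose proof (pow_lt x 6 Hx); pose proof (pow_lt x 7 Hx);
    pose proof (pow_lt x 8 Hx). lra. }
  pose proof (pow2_gt_0 (x - 1) ltac:(lra)). pose proof (pow2_gt_0 q ltac:(lra)).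
  apply (lt_of_pow_lt_pow _ _ 5); [nra|].
  apply (Rmult_lt_reg_r (q ^ 2)); [assumption|].
  replace ((Rpower (3 / q) (2/5) * (6 * x ^ 2 + 8 * x + 1)) ^ 5 * q ^ 2)
    with ((Rpower (3 / q) (2/5) ^ 5 * q ^ 2) * (6 * x ^ 2 + 8 * x + 1) ^ 5) by ring.
  rewrite E5. nra.
Qed.

Lemma gphi_lt_sqr_mul_Rpower h :
  0 < h -> h <> 1 -> gphi h < (h - 1) ^ 2 * Rpower h (- (2/3)).
Proof.
  intros Hh Hh1.
  enough (0 < (h - 1) ^ 2 * Rpower h (- (2/3)) - gphi h) by lra.
  refine (pos_of_deriv_sign (fun x => (x - 1) ^ 2 * Rpower x (- (2/3)) - gphi x)
            (fun x => (x - 1) / x * (Rpower x (- (2/3)) * (4 * x + 2) / 3 - 2))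
            1 _ _ _ _ _ h Hh Hh1).
  - lra.
  - unfold gphi. rewrite phi_1. ring.
  - intros x Hx. unfold Rpower, gphi, phi. auto_derive; [lra | field; lra].
  - intros x Hx. pose proof (Rpower_two_thirds_mul_gt x ltac:(lra) ltac:(lra)).
    assert ((x - 1) / x < 0) by (apply Rdiv_neg_pos; lra). nra.
  - intros x Hx. pose proof (Rpower_two_thirds_mul_gt x ltac:(lra) ltac:(lra)).
    assert (0 < (x - 1) / x) by (apply Rdiv_lt_0_compat; lra). nra.
Qed.

Lemma gphi_lt_sqr_mul_Rpower_div h :
  0 < h -> h <> 1 -> gphi h < (h - 1) ^ 2 * Rpower (3 / (h * (2 * h + 1))) (2/5).
Proof.
  intros Hh Hh1.
  set (E := fun x => Rpower (3 / (x * (2 * x + 1))) (2/5)).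
  assert (HE : forall x, 0 < x -> x <> 1 ->
                 2 < E x * (12 * x ^ 2 + 16 * x + 2) / (5 * (2 * x + 1))).
  { intros x Hx Hx1. pose proof (Rpower_two_fifths_mul_gt x Hx Hx1).
    apply (Rmult_lt_reg_r (5 * (2 * x + 1))); [lra|]. unfold E. field_simplify; lra. }
  enough (0 < (h - 1) ^ 2 * E h - gphi h) by (unfold E in *; lra).
  refine (pos_of_deriv_sign (fun x => (x - 1) ^ 2 * E x - gphi x)
            (fun x => (x - 1) / x * (E x * (12 * x ^ 2 + 16 * x + 2) / (5 * (2 * x + 1)) - 2))
            1 _ _ _ _ _ h Hh Hh1).
  - lra.
  - unfold gphi. rewrite phi_1. ring.
  - intros x Hx. unfold E, Rpower, gphi, phi.
    auto_derive; [repeat split; try apply Rdiv_lt_0_compat; nra | unfold Rdiv; field; nra].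
  - intros x Hx. pose proof (HE x ltac:(lra) ltac:(lra)).
    assert ((x - 1) / x < 0) by (apply Rdiv_neg_pos; lra). nra.
  - intros x Hx. pose proof (HE x ltac:(lra) ltac:(lra)).
    assert (0 < (x - 1) / x) by (apply Rdiv_lt_0_compat; lra). nra.
Qed.

Lemma gphi_cube_bound h : 0 < h -> h <> 1 -> gphi h ^ 3 * h ^ 2 < (h - 1) ^ 6.
Proof.
  intros Hh Hh1.
  pose proof (gphi_pos h Hh Hh1). pose proof (pow2_gt_0 h ltac:(lra)).
  pose proof (pow_lt_pow_l (gphi h) _ 3 ltac:(lra) (gphi_lt_sqr_mul_Rpower h Hh Hh1) ltac:(lia))
    as Hc.
  replace ((h - 1) ^ 6) with (((h - 1) ^ 2 * Rpower h (- (2/3))) ^ 3 * h ^ 2)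
    by (replace (((h - 1) ^ 2 * Rpower h (- (2/3))) ^ 3 * h ^ 2)
          with ((h - 1) ^ 6 * (Rpower h (- (2/3)) ^ 3 * h ^ 2)) by ring;
        rewrite Rpower_cube_mul_sqr by lra; ring).
  apply Rmult_lt_compat_r; assumption.
Qed.

Lemma gphi_fifth_bound h :
  0 < h -> h <> 1 -> gphi h ^ 5 * (h * (2 * h + 1)) ^ 2 < 9 * (h - 1) ^ 10.
Proof.
  intros Hh Hh1. set (q := h * (2 * h + 1)).
  assert (Hq : 0 < q) by (unfold q; nra).
  pose proof (gphi_pos h Hh Hh1). pose proof (pow2_gt_0 q ltac:(lra)).
  pose proof (pow_lt_pow_l (gphi h) _ 5 ltac:(lra) (gphi_lt_sqr_mul_Rpower_div h Hh Hh1)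
                ltac:(lia)) as Hc.
  fold q in Hc.
  replace (9 * (h - 1) ^ 10) with (((h - 1) ^ 2 * Rpower (3 / q) (2/5)) ^ 5 * q ^ 2)
    by (replace (((h - 1) ^ 2 * Rpower (3 / q) (2/5)) ^ 5 * q ^ 2)
          with ((h - 1) ^ 10 * (Rpower (3 / q) (2/5) ^ 5 * q ^ 2)) by ring;
        rewrite Rpower_fifth_mul_sqr by lra; ring).
  apply Rmult_lt_compat_r; assumption.
Qed.

Lemma gphi_root_bounds h r t : 0 < h -> h <> 1 -> 0 < r -> 0 < t ->
  r ^ 2 = gphi h -> t ^ 2 = (h - 1) ^ 2 ->
  r ^ 3 * h < t ^ 3 /\ r ^ 5 * (h * (2 * h + 1)) < 3 * t ^ 5.
Proof.
  intros Hh Hh1 Hr Ht Er Et. pose proof (pow_lt t 3 Ht). pose proof (pow_lt t 5 Ht).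
  split; apply (lt_of_pow_lt_pow _ _ 2); try lra.
  - replace ((t ^ 3) ^ 2) with ((t ^ 2) ^ 3) by ring.
    replace ((r ^ 3 * h) ^ 2) with ((r ^ 2) ^ 3 * h ^ 2) by ring.
    rewrite Et, Er. replace (((h - 1) ^ 2) ^ 3) with ((h - 1) ^ 6) by ring.
    apply gphi_cube_bound; assumption.
  - replace ((3 * t ^ 5) ^ 2) with (9 * (t ^ 2) ^ 5) by ring.
    replace ((r ^ 5 * (h * (2 * h + 1))) ^ 2) with ((r ^ 2) ^ 5 * (h * (2 * h + 1)) ^ 2) by ring.
    rewrite Et, Er. replace (((h - 1) ^ 2) ^ 5) with ((h - 1) ^ 10) by ring.
    apply gphi_fifth_bound; assumption.
Qed.

Lemma cube_lt_of_sqr_lt s u r : s * s = 1 -> 0 < u <= 1/2 -> 0 < r ->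
  u ^ 2 * (1 - 2 * (s * u) / 3) < r ^ 2 -> u ^ 3 * (1 - s * u) < r ^ 3.
Proof.
  intros Hs Hu Hr Hlo. destruct (sign_cases s Hs) as [Hs1 | Hs1].
  all: pose proof (pow_lt u 8 ltac:(lra)); pose proof (pow_lt r 3 Hr).
  all: apply (lt_of_pow_lt_pow _ _ 2); [lra|].
  all: assert (Hcube : (u ^ 2 * (1 - 2 * (s * u) / 3)) ^ 3 < (r ^ 2) ^ 3)
         by (apply pow_lt_pow_l; [rewrite Hs1; nra | exact Hlo | lia]).
  all: assert (Id : (u ^ 2 * (1 - 2 * (s * u) / 3)) ^ 3 - (u ^ 3 * (1 - s * u)) ^ 2
                    = u ^ 8 * (9 - 8 * s * u) / 27) by (rewrite Hs1; field).
  all: replace ((r ^ 3) ^ 2) with ((r ^ 2) ^ 3) by ring; rewrite Hs1 in Id; nra.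
Qed.

Lemma cube_gap_bound s u r : s * s = 1 -> 0 < u <= 1/2 -> 0 < r ->
  u ^ 2 * (1 - 2 * (s * u) / 3) < r ^ 2 < 4 * u ^ 2 -> / r ^ 3 - (1 + s * u) / u ^ 3 < 4 / r.
Proof.
  intros Hs Hu Hr [Hlo Hhi].
  pose proof (cube_lt_of_sqr_lt s u r Hs Hu Hr Hlo) as Hc.
  pose proof (pow_lt u 3 ltac:(lra)). pose proof (pow_lt r 3 Hr).
  assert (Hr2u : r < 2 * u) by nra.
  assert (Hs1 : 1/2 <= 1 - s * u) by (destruct (sign_cases s Hs) as [-> | ->]; lra).
  assert (/ r ^ 3 < / (u ^ 3 * (1 - s * u)))
    by (apply Rinv_lt_contravar; [apply Rmult_lt_0_compat; nra | exact Hc]).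
  assert (/ (u ^ 3 * (1 - s * u)) - (1 + s * u) / u ^ 3 = / (u * (1 - s * u)))
    by (destruct (sign_cases s Hs) as [-> | ->]; field; lra).
  assert (/ (u * (1 - s * u)) <= 2 / u).
  { apply (Rmult_le_reg_r (u * (1 - s * u))); [nra|].
    replace (/ (u * (1 - s * u)) * (u * (1 - s * u))) with 1 by (field; lra).
    replace (2 / u * (u * (1 - s * u))) with (2 * (1 - s * u)) by (field; lra). lra. }
  assert (2 / u < 4 / r).
  { apply (Rmult_lt_reg_r (u * r)); [nra|].
    replace (2 / u * (u * r)) with (2 * r) by (field; lra).
    replace (4 / r * (u * r)) with (4 * u) by (field; lra). lra. }
  lra.
Qed.

(** * Derivatives of j along a branch *)

Definition phi_branch (K : R -> R) : Prop :=
  forall f, 1 < f ->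
    0 < K f /\ K f <> 1 /\ phi (K f) = f /\ is_derive K f (K f / (K f - 1)).

Lemma phi_branch_hup : phi_branch hup.
Proof.
  intros f Hf. destruct (hup_spec f Hf) as [H1 H2].
  refine (conj _ (conj _ (conj H2 (is_derive_hup f Hf)))); lra.
Qed.

Lemma phi_branch_hlo : phi_branch hlo.
Proof.
  intros f Hf. destruct (hlo_spec f Hf) as [H1 H2].
  refine (conj _ (conj _ (conj H2 (is_derive_hlo f Hf)))); lra.
Qed.

Lemma hup_side f : 1 < f -> 0 < 1 * (hup f - 1).
Proof. intro Hf. destruct (hup_spec f Hf). lra. Qed.

Lemma hlo_side f : 1 < f -> 0 < -1 * (hlo f - 1).
Proof. intro Hf. destruct (hlo_spec f Hf). lra. Qed.

(* [s] is the sign of [K f - 1] on the branch, so that [s / (K f - 1) = / |K f - 1|]. *)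
Definition jbranch (s : R) (K : R -> R) (f : R) : R :=
  s / (K f - 1) - / sqrt (2 * (f - 1)).

Definition djbranch (s : R) (K : R -> R) (f : R) : R :=
  - s * K f / (K f - 1) ^ 3 + / sqrt (2 * (f - 1)) ^ 3.

Definition d2jbranch (s : R) (K : R -> R) (f : R) : R :=
  s * K f * (2 * K f + 1) / (K f - 1) ^ 5 - 3 / sqrt (2 * (f - 1)) ^ 5.

Lemma jup_jbranch : jup = jbranch 1 hup.
Proof. apply functional_extensionality. intro f. unfold jup, jbranch, Rdiv. ring. Qed.

Lemma jlo_jbranch : jlo = jbranch (-1) hlo.
Proof.
  apply functional_extensionality. intro f. unfold jlo, jbranch, Rdiv.
  replace (hlo f - 1) with (- (1 - hlo f)) by ring. rewrite Rinv_opp. ring.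
Qed.

Lemma is_derive_inv_sqrt f : 1 < f ->
  is_derive (fun t => / sqrt (2 * (t - 1))) f (- / sqrt (2 * (f - 1)) ^ 3).
Proof.
  intro Hf. pose proof (sqrt_lt_R0 (2 * (f - 1)) ltac:(lra)) as Hr.
  unfold Rminus in *. auto_derive; [repeat split; lra | field; lra].
Qed.

Lemma is_derive_inv_sqrt_cube f : 1 < f ->
  is_derive (fun t => / sqrt (2 * (t - 1)) ^ 3) f (- 3 / sqrt (2 * (f - 1)) ^ 5).
Proof.
  intro Hf. pose proof (sqrt_lt_R0 (2 * (f - 1)) ltac:(lra)) as Hr.
  unfold Rminus in *.
  auto_derive; [repeat split; try lra; apply Rgt_not_eq; repeat apply Rmult_lt_0_compat; lra
               | field; lra].
Qed.

Lemma is_derive_jbranch s K f : phi_branch K -> 1 < f ->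
  is_derive (jbranch s K) f (djbranch s K f).
Proof.
  intros HK Hf. destruct (HK f Hf) as (_ & HK1 & _ & HdK).
  pose proof (sqrt_lt_R0 (2 * (f - 1)) ltac:(lra)) as Hr.
  assert (D : is_derive (fun t => s / (K t - 1)) f (- s / (K f - 1) ^ 2 * (K f / (K f - 1)))).
  { apply (is_derive_comp_R (fun k => s / (k - 1)) K f); [exact HdK|].
    auto_derive; [lra | field; lra]. }
  replace (djbranch s K f) with (- s / (K f - 1) ^ 2 * (K f / (K f - 1))
                                 - - / sqrt (2 * (f - 1)) ^ 3)
    by (unfold djbranch; field; lra).
  exact (is_derive_minus _ _ f _ _ D (is_derive_inv_sqrt f Hf)).
Qed.

Lemma is_derive_djbranch s K f : phi_branch K -> 1 < f ->
  is_derive (djbranch s K) f (d2jbranch s K f).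
Proof.
  intros HK Hf. destruct (HK f Hf) as (_ & HK1 & _ & HdK).
  pose proof (sqrt_lt_R0 (2 * (f - 1)) ltac:(lra)) as Hr.
  assert (D : is_derive (fun t => - s * K t / (K t - 1) ^ 3) f
                (s * (2 * K f + 1) / (K f - 1) ^ 4 * (K f / (K f - 1)))).
  { apply (is_derive_comp_R (fun k => - s * k / (k - 1) ^ 3) K f); [exact HdK|].
    assert (K f - 1 <> 0) by lra.
    auto_derive; [unfold Rminus in *; repeat apply Rmult_integral_contrapositive_currified; lra
                 | field; lra]. }
  replace (d2jbranch s K f) with (s * (2 * K f + 1) / (K f - 1) ^ 4 * (K f / (K f - 1))
                                  + - 3 / sqrt (2 * (f - 1)) ^ 5)
    by (unfold d2jbranch; field; lra).
  exact (is_derive_plus _ _ f _ _ D (is_derive_inv_sqrt_cube f Hf)).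
Qed.

Lemma Derive_jbranch s K f : phi_branch K -> 1 < f -> Derive (jbranch s K) f = djbranch s K f.
Proof. intros HK Hf. apply is_derive_unique, is_derive_jbranch; assumption. Qed.

Lemma is_derive_Derive_jbranch s K f : phi_branch K -> 1 < f ->
  is_derive (Derive (jbranch s K)) f (d2jbranch s K f).
Proof.
  intros HK Hf. apply (is_derive_ext_loc (djbranch s K)).
  - apply (filter_imp (fun t => 1 < t)); [|apply locally_gt1, Hf].
    intros t Ht. symmetry. apply Derive_jbranch; assumption.
  - apply is_derive_djbranch; assumption.
Qed.

Lemma djbranch_eq s K f : s * s = 1 -> K f <> 1 ->
  djbranch s K f = / sqrt (2 * (f - 1)) ^ 3 - K f / (s * (K f - 1)) ^ 3.
Proof.
  intros Hs HK1. unfold djbranch. rewrite Rplus_comm. unfold Rminus. f_equal.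
  assert (K f - 1 <> 0) by lra.
  destruct (sign_cases s Hs) as [-> | ->]; field; assumption.
Qed.

Lemma d2jbranch_eq s K f : s * s = 1 -> K f <> 1 ->
  d2jbranch s K f = K f * (2 * K f + 1) / (s * (K f - 1)) ^ 5 - 3 / sqrt (2 * (f - 1)) ^ 5.
Proof.
  intros Hs HK1. unfold d2jbranch, Rminus. f_equal.
  assert (K f - 1 <> 0) by lra.
  destruct (sign_cases s Hs) as [-> | ->]; field; assumption.
Qed.

Lemma jbranch_derivative_signs s K f : phi_branch K -> 1 < f ->
  s * s = 1 -> 0 < s * (K f - 1) -> 0 < djbranch s K f /\ d2jbranch s K f < 0.
Proof.
  intros HK Hf Hs Hside. destruct (HK f Hf) as (HK0 & HK1 & Hphi & _).
  rewrite djbranch_eq, d2jbranch_eq by assumption.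
  pose proof (sqrt_lt_R0 (2 * (f - 1)) ltac:(lra)) as Hr.
  pose proof (sqrt_sqr_gphi (K f) f Hphi ltac:(lra)) as Er.
  assert (Et : (s * (K f - 1)) ^ 2 = (K f - 1) ^ 2)
    by (replace ((s * (K f - 1)) ^ 2) with (s * s * (K f - 1) ^ 2) by ring; rewrite Hs; ring).
  destruct (gphi_root_bounds (K f) _ _ HK0 HK1 Hr Hside Er Et) as [B3 B5].
  set (r := sqrt (2 * (f - 1))) in *. set (h := K f) in *. set (t := s * (h - 1)) in *.
  clearbody r h t.
  pose proof (pow_lt t 3 Hside). pose proof (pow_lt t 5 Hside).
  pose proof (pow_lt r 3 Hr). pose proof (pow_lt r 5 Hr).
  split.
  - replace (/ r ^ 3 - h / t ^ 3) with ((t ^ 3 - r ^ 3 * h) / (t ^ 3 * r ^ 3)) by (field; lra).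
    apply Rdiv_lt_0_compat; nra.
  - replace (h * (2 * h + 1) / t ^ 5 - 3 / r ^ 5)
      with ((r ^ 5 * (h * (2 * h + 1)) - 3 * t ^ 5) / (t ^ 5 * r ^ 5)) by (field; lra).
    apply Rdiv_neg_pos; nra.
Qed.

Lemma djbranch_lt_near1 s K f : phi_branch K -> 1 < f -> s * s = 1 ->
  0 < s * (K f - 1) -> 1/2 <= K f <= 3/2 -> djbranch s K f < 4 / sqrt (2 * (f - 1)).
Proof.
  intros HK Hf Hs Hside Hnear. destruct (HK f Hf) as (HK0 & HK1 & Hphi & _).
  rewrite djbranch_eq by assumption.
  pose proof (sqrt_lt_R0 (2 * (f - 1)) ltac:(lra)) as Hr.
  pose proof (sqrt_sqr_gphi (K f) f Hphi ltac:(lra)) as Er.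
  pose proof (gphi_near1_bounds (K f) Hnear HK1) as Hg. rewrite <- Er in Hg.
  set (r := sqrt (2 * (f - 1))) in *. set (h := K f) in *. set (t := s * (h - 1)) in *.
  assert (Et : h - 1 = s * t)
    by (unfold t; replace (s * (s * (h - 1))) with (s * s * (h - 1)) by ring; rewrite Hs; ring).
  assert (Ht : t <= 1/2) by (unfold t; destruct (sign_cases s Hs) as [-> | ->]; lra).
  replace h with (1 + s * t) by lra. rewrite Et in Hg.
  replace ((s * t) ^ 2) with (t ^ 2) in Hg
    by (replace ((s * t) ^ 2) with (s * s * t ^ 2) by ring; rewrite Hs; ring).
  apply cube_gap_bound; [exact Hs | lra | exact Hr | exact Hg].
Qed.

Lemma bigO_Derive_jbranch s K delta : phi_branch K -> s * s = 1 ->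
  (forall f, 1 < f -> 0 < s * (K f - 1)) -> 0 < delta ->
  (forall f, 1 < f < 1 + delta -> 1/2 <= K f <= 3/2) ->
  bigO_inv_sqrt_at1 (Derive (jbranch s K)).
Proof.
  intros HK Hs Hside Hd Hnear. exists 4, delta. split; [exact Hd|]. intros f Hf.
  rewrite Derive_jbranch by (auto; lra).
  destruct (jbranch_derivative_signs s K f HK ltac:(lra) Hs (Hside f ltac:(lra))) as [Hpos _].
  rewrite Rabs_pos_eq by lra.
  pose proof (djbranch_lt_near1 s K f HK ltac:(lra) Hs (Hside f ltac:(lra)) (Hnear f Hf)).
  assert (/ sqrt (2 * (f - 1)) <= / sqrt (f - 1)).
  { apply Rinv_le_contravar; [apply sqrt_lt_R0; lra | apply sqrt_le_1_alt; lra]. }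
  unfold Rdiv in *. lra.
Qed.

(** * Behaviour at f = 1 *)

Definition rationalized_gap (c u : R) : R := c / (sqrt (1 + u * c) * (sqrt (1 + u * c) + 1)).

Lemma inv_sub_inv_sqrt_eq c u : 0 < u -> 0 < 1 + u * c ->
  / u - / sqrt (u ^ 2 * (1 + u * c)) = rationalized_gap c u.
Proof.
  intros Hu Hc. unfold rationalized_gap.
  rewrite sqrt_mult_alt, <- Rsqr_pow2, sqrt_Rsqr by (try apply pow_le; lra).
  pose proof (sqrt_sqrt (1 + u * c) ltac:(lra)) as Eq.
  pose proof (sqrt_lt_R0 (1 + u * c) Hc) as Hq.
  set (q := sqrt (1 + u * c)) in *. clearbody q.
  replace c with ((q * q - 1) / u) by (rewrite Eq; field; lra).
  field. repeat split; lra.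
Qed.

Lemma rationalized_gap_lim (c k : R) :
  filterlim (fun u => rationalized_gap (c + k * u) u) (at_right 0) (locally (c / 2)).
Proof.
  replace (c / 2) with (rationalized_gap (c + k * 0) 0)
    by (unfold rationalized_gap; rewrite Rmult_0_l, Rplus_0_r, Rmult_0_r, Rplus_0_r, sqrt_1; field).
  apply (continuous_at_right (fun u => rationalized_gap (c + k * u) u)),
    (@ex_derive_continuous R_AbsRing R_NormedModule).
  unfold rationalized_gap. auto_derive.
  replace (1 + 0 * (c + k * 0)) with 1 by ring. rewrite sqrt_1. repeat split; lra.
Qed.

Lemma inv_sub_inv_sqrt_lim (g : R -> R) (c k delta : R) : 0 < delta ->
  (forall u, 0 < u < delta ->
     0 < 1 + u * c /\ u ^ 2 * (1 + u * c) <= g u <= u ^ 2 * (1 + u * (c + k * u))) ->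
  filterlim (fun u => / u - / sqrt (g u)) (at_right 0) (locally (c / 2)).
Proof.
  intros Hd Hg.
  change (filterlim (fun u => / u - / sqrt (g u)) (at_right 0) (Rbar_locally (c / 2))).
  apply (filterlim_le_le (fun u => rationalized_gap (c + 0 * u) u) _
                         (fun u => rationalized_gap (c + k * u) u));
    [| apply rationalized_gap_lim | apply rationalized_gap_lim].
  apply (at_right_of_interval 0 delta); [exact Hd|]. intros u Hu.
  destruct (Hg u ltac:(lra)) as (Hc & Hlo & Hhi).
  pose proof (pow2_gt_0 u ltac:(lra)).
  assert (Hck : 0 < 1 + u * (c + k * u)) by nra.
  rewrite <- !inv_sub_inv_sqrt_eq by (try rewrite Rmult_0_l, Rplus_0_r; lra).
  rewrite Rmult_0_l, Rplus_0_r.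
  split; apply Rplus_le_compat_l, Ropp_le_contravar, Rinv_le_contravar;
    try apply sqrt_lt_R0; try apply sqrt_le_1_alt; nra.
Qed.

Lemma jup_lim : filterlim jup (at_right 1) (locally (- (1/3))).
Proof.
  apply (filterlim_ext_loc (fun f => / (hup f - 1) - / sqrt (gphi (1 + (hup f - 1))))).
  - apply (at_right_of_interval 1 1); [lra|]. intros f Hf.
    destruct (hup_spec f ltac:(lra)) as [_ H2].
    unfold jup, gphi. replace (1 + (hup f - 1)) with (hup f) by ring. rewrite H2. reflexivity.
  - replace (- (1/3)) with (- (2/3) / 2) by field.
    apply (filterlim_comp _ _ _ _ (fun u => / u - / sqrt (gphi (1 + u))) _ (at_right 0));
      [apply hup_sub1_lim|].
    apply (inv_sub_inv_sqrt_lim _ (- (2/3)) (1/2) 1); [lra|]. intros u Hu.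
    pose proof (ln_lt_cubic (1 + u) ltac:(lra)). pose proof (quartic_lt_ln (1 + u) ltac:(lra)).
    unfold gphi, phi. replace (1 + u - 1) with u in * by ring. split; [lra | split; nra].
Qed.

Lemma jlo_lim : filterlim jlo (at_right 1) (locally (1/3)).
Proof.
  apply (filterlim_ext_loc (fun f => / (1 - hlo f) - / sqrt (gphi (1 - (1 - hlo f))))).
  - apply (at_right_of_interval 1 1); [lra|]. intros f Hf.
    destruct (hlo_spec f ltac:(lra)) as [_ H2].
    unfold jlo, gphi. replace (1 - (1 - hlo f)) with (hlo f) by ring. rewrite H2. reflexivity.
  - replace (1/3) with ((2/3) / 2) by field.
    apply (filterlim_comp _ _ _ _ (fun u => / u - / sqrt (gphi (1 - u))) _ (at_right 0));
      [apply one_sub_hlo_lim|].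
    apply (inv_sub_inv_sqrt_lim _ (2/3) 1 (1/2)); [lra|]. intros u Hu.
    pose proof (cubic_lt_opp_ln (1 - u) ltac:(lra)).
    pose proof (opp_ln_lt_quartic (1 - u) ltac:(lra)).
    unfold gphi, phi. replace (1 - (1 - u)) with u in * by ring. split; [lra | split; nra].
Qed.

Lemma is_derive_jup f : 1 < f -> is_derive jup f (djbranch 1 hup f).
Proof. intro Hf. rewrite jup_jbranch. exact (is_derive_jbranch _ _ f phi_branch_hup Hf). Qed.

Lemma is_derive_jlo f : 1 < f -> is_derive jlo f (djbranch (-1) hlo f).
Proof. intro Hf. rewrite jlo_jbranch. exact (is_derive_jbranch _ _ f phi_branch_hlo Hf). Qed.

Lemma is_derive_Derive_jup f : 1 < f -> is_derive (Derive jup) f (d2jbranch 1 hup f).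
Proof. intro Hf. rewrite jup_jbranch. exact (is_derive_Derive_jbranch _ _ f phi_branch_hup Hf). Qed.

Lemma is_derive_Derive_jlo f : 1 < f -> is_derive (Derive jlo) f (d2jbranch (-1) hlo f).
Proof. intro Hf. rewrite jlo_jbranch. exact (is_derive_Derive_jbranch _ _ f phi_branch_hlo Hf). Qed.

Lemma jup_derivative_signs f : 1 < f -> 0 < djbranch 1 hup f /\ d2jbranch 1 hup f < 0.
Proof. intro Hf. apply jbranch_derivative_signs; auto using phi_branch_hup, hup_side; lra. Qed.

Lemma jlo_derivative_signs f : 1 < f -> 0 < djbranch (-1) hlo f /\ d2jbranch (-1) hlo f < 0.
Proof. intro Hf. apply jbranch_derivative_signs; auto using phi_branch_hlo, hlo_side; lra. Qed.

Lemma bigO_Derive_jup : bigO_inv_sqrt_at1 (Derive jup).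
Proof.
  pose proof (phi_increasing 1 (3/2) ltac:(lra) ltac:(lra)) as Hphi. rewrite phi_1 in Hphi.
  rewrite jup_jbranch. apply (bigO_Derive_jbranch 1 hup (phi (3/2) - 1));
    [exact phi_branch_hup | lra | exact hup_side | lra |].
  intros f Hf. destruct (hup_spec f ltac:(lra)) as [H1 _].
  pose proof (hup_lt_of_lt_phi f (3/2) ltac:(lra) ltac:(lra)). lra.
Qed.

Lemma bigO_Derive_jlo : bigO_inv_sqrt_at1 (Derive jlo).
Proof.
  pose proof (phi_decreasing (1/2) 1 ltac:(lra) ltac:(lra) ltac:(lra)) as Hphi.
  rewrite phi_1 in Hphi.
  rewrite jlo_jbranch. apply (bigO_Derive_jbranch (-1) hlo (phi (1/2) - 1));
    [exact phi_branch_hlo | lra | exact hlo_side | lra |].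
  intros f Hf. destruct (hlo_spec f ltac:(lra)) as [H1 _].
  pose proof (lt_hlo_of_lt_phi f (1/2) ltac:(lra) ltac:(lra)). lra.
Qed.

Lemma jsum_derivative_signs f : 1 < f ->
  0 < djbranch 1 hup f + djbranch (-1) hlo f /\ d2jbranch 1 hup f + d2jbranch (-1) hlo f < 0.
Proof.
  intro Hf. pose proof (jup_derivative_signs f Hf). pose proof (jlo_derivative_signs f Hf). lra.
Qed.

Lemma is_derive_jsum f : 1 < f -> is_derive jsum f (djbranch 1 hup f + djbranch (-1) hlo f).
Proof. intro Hf. exact (is_derive_plus _ _ f _ _ (is_derive_jup f Hf) (is_derive_jlo f Hf)). Qed.

Lemma is_derive_Derive_jsum f : 1 < f ->
  is_derive (Derive jsum) f (d2jbranch 1 hup f + d2jbranch (-1) hlo f).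
Proof.
  intro Hf. apply (is_derive_ext_loc (fun t => djbranch 1 hup t + djbranch (-1) hlo t)).
  - apply (filter_imp (fun t => 1 < t)); [|apply locally_gt1, Hf].
    intros t Ht. symmetry. apply is_derive_unique, is_derive_jsum, Ht.
  - exact (is_derive_plus _ _ f _ _ (is_derive_djbranch 1 hup f phi_branch_hup Hf)
                                    (is_derive_djbranch (-1) hlo f phi_branch_hlo Hf)).
Qed.

Lemma Derive_jsum f : 1 < f -> Derive jsum f = Derive jup f + Derive jlo f.
Proof.
  intro Hf. rewrite (is_derive_unique _ _ _ (is_derive_jsum f Hf)),
    (is_derive_unique _ _ _ (is_derive_jup f Hf)), (is_derive_unique _ _ _ (is_derive_jlo f Hf)).
  reflexivity.
Qed.

Lemma jsum_increasing x y : 1 < x -> x < y -> jsum x < jsum y.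
Proof.
  intros Hx Hxy.
  apply (incr_function jsum 1 p_infty (fun f => djbranch 1 hup f + djbranch (-1) hlo f));
    simpl; auto; try lra.
  - intros f Hf _. apply is_derive_jsum, Hf.
  - intros f Hf _. apply jsum_derivative_signs, Hf.
Qed.

Lemma jsum_lim : filterlim jsum (at_right 1) (locally 0).
Proof.
  apply (filterlim_comp_2 jup jlo Rplus (G := Rbar_locally (- (1/3))) (H := Rbar_locally (1/3)));
    [exact jup_lim | exact jlo_lim |].
  change (locally 0) with (Rbar_locally 0).
  apply filterlim_Rbar_plus. unfold is_Rbar_plus. simpl. do 2 f_equal. lra.
Qed.

Lemma jsum_pos f : 1 < f -> 0 < jsum f.
Proof. apply (pos_of_increasing_lim0 jsum 1 jsum_increasing jsum_lim). Qed.

Lemma jup_neg f : 1 < f -> jup f < 0.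
Proof.
  intro Hf. destruct (hup_spec f Hf) as [H1 H2].
  pose proof (gphi_lt_sqr (hup f) H1) as Hlt. rewrite <- (sqrt_sqr_gphi _ f H2) in Hlt by lra.
  pose proof (sqrt_lt_R0 (2 * (f - 1)) ltac:(lra)).
  assert (sqrt (2 * (f - 1)) < hup f - 1) by (apply (lt_of_pow_lt_pow _ _ 2); lra).
  assert (/ (hup f - 1) < / sqrt (2 * (f - 1))) by (apply Rinv_lt_contravar; nra).
  unfold jup. lra.
Qed.

Lemma jlo_lt1 f : 1 < f -> jlo f < 1.
Proof.
  intro Hf. destruct (hlo_spec f Hf) as [H1 H2].
  pose proof (gphi_lt_sqr_div (hlo f) H1) as Hlt. rewrite <- (sqrt_sqr_gphi _ f H2) in Hlt by lra.
  pose proof (sqrt_lt_R0 (2 * (f - 1)) ltac:(lra)).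
  assert (Hq : 0 < (1 - hlo f) / hlo f) by (apply Rdiv_lt_0_compat; lra).
  assert (sqrt (2 * (f - 1)) < (1 - hlo f) / hlo f) by (apply (lt_of_pow_lt_pow _ _ 2); lra).
  assert (/ ((1 - hlo f) / hlo f) < / sqrt (2 * (f - 1))) by (apply Rinv_lt_contravar; nra).
  replace (/ ((1 - hlo f) / hlo f)) with (/ (1 - hlo f) - 1) in * by (field; lra).
  unfold jlo. lra.
Qed.

Lemma jsum_eq f : 1 < f -> jsum f = / (hup f - 1) + / (1 - hlo f) - sqrt (2 / (f - 1)).
Proof.
  intro Hf. unfold jsum, jup, jlo.
  pose proof (sqrt_lt_R0 (2 * (f - 1)) ltac:(lra)) as Hr.
  pose proof (sqrt_sqrt (2 * (f - 1)) ltac:(lra)) as Er.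
  replace (sqrt (2 / (f - 1))) with (2 / sqrt (2 * (f - 1))).
  - unfold Rdiv. ring.
  - rewrite <- (sqrt_pow2 (2 / sqrt (2 * (f - 1)))) by (apply Rlt_le, Rdiv_lt_0_compat; lra).
    f_equal. replace (f - 1) with (sqrt (2 * (f - 1)) * sqrt (2 * (f - 1)) / 2) at 2 by lra.
    field. lra.
Qed.

Theorem lemma2p3 :
  (* (a) *)
  filterlim jup (at_right 1) (locally (-(1/3))) /\
  filterlim jlo (at_right 1) (locally (1/3)) /\
  (* (b) *)
  (forall f, 1 < f -> ex_derive jup f /\ 0 < Derive jup f) /\
  (forall f, 1 < f -> ex_derive jlo f /\ 0 < Derive jlo f) /\
  bigO_inv_sqrt_at1 (Derive jup) /\
  bigO_inv_sqrt_at1 (Derive jlo) /\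
  (* (c) *)
  (forall f, 1 < f -> ex_derive (Derive jup) f /\ Derive (Derive jup) f < 0) /\
  (forall f, 1 < f -> ex_derive (Derive jlo) f /\ Derive (Derive jlo) f < 0) /\
  (* (d) *)
  (forall f, 1 < f ->
     jsum f = / (hup f - 1) + / (1 - hlo f) - sqrt (2 / (f - 1))) /\
  (forall f, 1 < f -> ex_derive jsum f /\ 0 < Derive jsum f) /\
  (forall f, 1 < f -> ex_derive (Derive jsum) f /\ Derive (Derive jsum) f < 0) /\
  filterlim jsum (at_right 1) (locally 0) /\
  bigO_inv_sqrt_at1 (Derive jsum) /\
  (* (e) *)
  (forall f, 1 < f -> 0 < jsum f < 1).
Proof.
  split; [exact jup_lim|]. split; [exact jlo_lim|].
  split.
  { intros f Hf. destruct (jup_derivative_signs f Hf) as [Hpos _].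
    exact (ex_derive_Derive_pos _ _ _ (is_derive_jup f Hf) Hpos). }
  split.
  { intros f Hf. destruct (jlo_derivative_signs f Hf) as [Hpos _].
    exact (ex_derive_Derive_pos _ _ _ (is_derive_jlo f Hf) Hpos). }
  split; [exact bigO_Derive_jup|]. split; [exact bigO_Derive_jlo|].
  split.
  { intros f Hf. destruct (jup_derivative_signs f Hf) as [_ Hneg].
    exact (ex_derive_Derive_neg _ _ _ (is_derive_Derive_jup f Hf) Hneg). }
  split.
  { intros f Hf. destruct (jlo_derivative_signs f Hf) as [_ Hneg].
    exact (ex_derive_Derive_neg _ _ _ (is_derive_Derive_jlo f Hf) Hneg). }
  split; [exact jsum_eq|].
  split.
  { intros f Hf. destruct (jsum_derivative_signs f Hf) as [Hpos _].
    exact (ex_derive_Derive_pos _ _ _ (is_derive_jsum f Hf) Hpos). }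
  split.
  { intros f Hf. destruct (jsum_derivative_signs f Hf) as [_ Hneg].
    exact (ex_derive_Derive_neg _ _ _ (is_derive_Derive_jsum f Hf) Hneg). }
  split; [exact jsum_lim|].
  split; [exact (bigO_inv_sqrt_at1_plus _ _ _ Derive_jsum bigO_Derive_jup bigO_Derive_jlo)|].
  intros f Hf. split; [exact (jsum_pos f Hf)|].
  unfold jsum. pose proof (jup_neg f Hf). pose proof (jlo_lt1 f Hf). lra.
Qed.
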